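(* Let $\lambda\in\mathfrak{h}^*$ be integral with $\lambda+\rho$ dominant, and suppose $\Sigma=\{\alpha_{i_1},\dots,\alpha_{i_s}\}$ ($i_1<\dots<i_s$) contains no two adjacent simple roots. Identify $W^{\mathfrak{p}}$ with $\{0,1\}^n$ via LS words. (1) If $\alpha_n\notin\Sigma$, then $W^{\mathfrak{p},\Sigma}=\{d_1\dots d_n: d_{i_k}d_{i_k+1}=01 \text{ for } k=1,\dots,s\}$. (2) If $\alpha_n\in\Sigma$ (so $i_s=n$), then $W^{\mathfrak{p},\Sigma}=\{d_1\dots d_{n-1}0: d_{i_k}d_{i_k+1}=01\text{ for }k=1,\dots,s-1\}$.
   Context: Setup: $\mathfrak{g}=\mathfrak{sp}(2n,\mathbb{C})$, weights $[\lambda_1,\dots,\lambda_n]$; integral means all $\lambda_i\in\mathbb{Z}$, dominant means $\lambda_1\ge\dots\ge\lambda_n\ge 0$. Positive roots $a_{ij}=\epsilon_i-\epsilon_j$, $b_i=2\epsilon_i$, $c_{ij}=\epsilon_i+\epsilon_j$, $c_{ii}:=b_i$; simple roots $\alpha_i=\epsilon_i-\epsilon_{i+1}$ ($i<n$), $\alpha_n=2\epsilon_n$; $\rho=[n,\dots,1]$. $\mathfrak{p}$ is the parabolic with Levi containing $\alpha_1,\dots,\alpha_{n-1}$, $\Delta(\mathfrak{u})=\{c_{ij}:i\le j\}$; $\Phi_w=\{\alpha>0:w^{-1}\alpha<0\}$; $W^{\mathfrak{p}}=\{w\in W:\Phi_w\subseteq\Delta(\mathfrak{u})\}$. Simple singular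 roots: $\Sigma=\{\alpha\text{ simple}:\langle\lambda+\rho,\alpha^\vee\rangle=0\}$. Singular Hasse diagram: $W^{\mathfrak{p},\Sigma}=\{w\in W^{\mathfrak{p}}: w\sigma_\alpha\in W^{\mathfrak{p}}\text{ and } l(w\sigma_\alpha)>l(w)\text{ for all }\alpha\in\Sigma\}$. LS word of $w\in W^{\mathfrak{p}}$: the unique $d\in\{0,1\}^n$ with $\Phi_w=S(d)$, where for $d$ with ones exactly at positions $j_1<\dots<j_k$, $S(d)=\{c_{r,\,n+1-m}:1\le m\le k,\ j_m-m+1\le r\le n+1-m\}$. *)

(* Indices are 0-based: paper index i (1..n) is ordinal i-1. *)
From HB Require Import structures.
From mathcomp Require Import all_boot all_order all_algebra all_fingroup.
Set Implicit Arguments. Unset Strict Implicit. Unset Printing Implicit Defensive.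
Import GRing.Theory Num.Theory.
Local Open Scope ring_scope.

Section C.
Variable n : nat.

(* Weyl group of C_n: signed permutations.  w = (p, s) acts by
   w e_i = (-1)^(s i) e_(p i). *)
Definition W := ({perm 'I_n} * {ffun 'I_n -> bool})%type.

Definition idW : W := (1%g, [ffun=> false]).

(* product w1 w2 (as linear maps: first w2, then w1) *)
Definition mulW (w1 w2 : W) : W :=
  ((w2.1 * w1.1)%g, [ffun i => w2.2 i (+) w1.2 (w2.1 i)]).

(* action of w^{-1} on a vector v in Z^n *)
Definition actinv (w : W) (v : {ffun 'I_n -> int}) : {ffun 'I_n -> int} :=
  [ffun i => (-1) ^+ (w.2 i) * v (w.1 i)].

Definition nxt (k : 'I_n) : 'I_n := insubd k k.+1.

(* simple reflections: sigma_{alpha_k}; alpha_k = e_k - e_{k+1} for k+1<n,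
   alpha_{n-1} = 2 e_{n-1} (0-based) *)
Definition sref (k : 'I_n) : W :=
  if (k.+1 < n)%N then (tperm k (nxt k), [ffun=> false])
  else (1%g, [ffun i => i == k]).

Fixpoint reach (k : nat) : seq W :=
  if k is k'.+1 then [seq mulW x (sref j) | x <- reach k', j <- enum 'I_n]
  else [:: idW].

(* Coxeter length: least number of simple reflections in a word for w
   (every shortest word has length < |W|) *)
Definition len (w : W) : nat :=
  find (fun k => w \in reach k) (iota 0 #|{: W}|).

(* root labels: (i, j, false) = a_ij = e_i - e_j (i<j),
                (i, j, true)  = c_ij = e_i + e_j (i<=j), c_ii = b_i = 2e_i *)
Definition RL := ('I_n * 'I_n * bool)%type.
Definition posroot (r : RL) : bool :=
  if r.2 then (r.1.1 <= r.1.2)%N else (r.1.1 < r.1.2)%N.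
Definition rvec (r : RL) : {ffun 'I_n -> int} :=
  [ffun k => if r.2 then ((k == r.1.1)%:Z + (k == r.1.2)%:Z)
             else ((k == r.1.1)%:Z - (k == r.1.2)%:Z)].
Definition negrootv (v : {ffun 'I_n -> int}) : bool :=
  [exists r : RL, posroot r && (rvec r == [ffun k => - v k])].

Definition Phi (w : W) : {set RL} :=
  [set r : RL | posroot r && negrootv (actinv w (rvec r))].

Definition Delta_u : {set RL} := [set r : RL | r.2 && (r.1.1 <= r.1.2)%N].

Definition inWp (w : W) : bool := Phi w \subset Delta_u.

(* <lambda + rho, alpha_k^vee> with rho = [n, ..., 1] *)
Definition lrho (lam : 'I_n -> int) (i : 'I_n) : int := lam i + (n - i)%:Z.
Definition pairing (lam : 'I_n -> int) (k : 'I_n) : int :=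
  if (k.+1 < n)%N then lrho lam k - lrho lam (nxt k) else lrho lam k.
Definition singular (lam : 'I_n -> int) (k : 'I_n) : bool := pairing lam k == 0.

Definition inWpS (lam : 'I_n -> int) (w : W) : Prop :=
  inWp w /\ forall k : 'I_n, singular lam k ->
    inWp (mulW w (sref k)) /\ (len w < len (mulW w (sref k)))%N.

(* S(d): ones of d at 0-based positions p_0 < ... < p_{k-1}; for 0-based m
   (paper m+1) the roots c_{r, n-1-m} (0-based) with p_m - m <= r <= n-1-m *)
Definition ones (d : 'I_n -> bool) : seq nat := [seq val i | i <- enum 'I_n & d i].
Definition S (d : 'I_n -> bool) : {set RL} :=
  [set r : RL | r.2 && has (fun m => [&& (r.1.2 == (n - m.+1)%N :> nat),
                                         (nth 0 (ones d) m - m <= r.1.1)%N &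
                                         (r.1.1 <= n - m.+1)%N])
                          (iota 0 (size (ones d)))].

(* Under the LS-word identification, W^{p,Sigma} equals {d | P d}:
   every w in W^{p,Sigma} with LS word d satisfies P d, and every d with
   P d is the LS word of some w in W^{p,Sigma}. *)
Definition WpS_is (lam : 'I_n -> int) (P : ('I_n -> bool) -> Prop) : Prop :=
  (forall (w : W) (d : 'I_n -> bool), inWpS lam w -> Phi w = S d -> P d) /\
  (forall d : 'I_n -> bool, P d -> exists w : W, inWpS lam w /\ Phi w = S d).

End C.

From mathcomp Require Import all_boot all_order all_algebra all_fingroup zify.
Import GRing.Theory Num.Theory.

(* Write w = (p, s) for the signed permutation w e_i = (-1)^(s i) e_(p i).  Right
   multiplication by a simple reflection s_k changes the inversion set Phi w by exactly
   the positive root +-w(alpha_k), and l(w) = #|Phi w|.  Hence, for w in W^p, w s_k is a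
   longer element of W^p iff that root is a c-root outside Phi w, which for a signed
   permutation reads s k = 0 and s (k+1) = 1 (just s k = 0 for the long root alpha_n).
   On the other hand Phi w determines w, and every S(d) is Phi of the element with sign
   vector d whose inverse lists the zeros of d increasingly and then its ones
   decreasingly; so the LS word of w is its sign vector, and both descriptions follow. *)

Set Implicit Arguments.
Unset Strict Implicit.
Unset Printing Implicit Defensive.

Section Ordinals.
Variable n : nat.
Implicit Types (j k u v : 'I_n) (p q : {perm 'I_n}).

Lemma val_nxt k : (k.+1 < n)%N -> nxt k = k.+1 :> nat.
Proof. by move=> lt_kn; rewrite /nxt val_insubd lt_kn. Qed.

Lemma ltn_nxt k : (k.+1 < n)%N -> (k < nxt k)%N.
Proof. by move=> /val_nxt ->. Qed.

Lemma nxt_neq k : (k.+1 < n)%N -> k != nxt k.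
Proof. by move=> /ltn_nxt; case: eqP => // <-; rewrite ltnn. Qed.

Lemma ord_ind_up (P : 'I_n -> Prop) :
  (forall j, j = 0 :> nat -> P j) -> (forall j, (j.+1 < n)%N -> P j -> P (nxt j)) ->
  forall j, P j.
Proof.
move=> P0 PS j; have [m] := ubnP j; elim: m j => // m IH j.
case: (posnP j) => [/P0 // | j_gt0] lt_jm.
have lt_pj : (j.-1 < n)%N := leq_ltn_trans (leq_pred j) (ltn_ord j).
have lt_pjn : ((Ordinal lt_pj).+1 < n)%N by rewrite /= prednK.
have -> : j = nxt (Ordinal lt_pj) by apply/ord_inj; rewrite val_nxt //= prednK.
by apply: PS => //; apply: IH; rewrite /=; move: lt_jm j_gt0; case: (nat_of_ord j).
Qed.

Lemma ord_ind_down (P : 'I_n -> Prop) :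
  (forall j, ~~ (j.+1 < n)%N -> P j) -> (forall j, (j.+1 < n)%N -> P (nxt j) -> P j) ->
  forall j, P j.
Proof.
move=> Plast PS j; have [m] := ubnP (n - j); elim: m j => // m IH j lt_m.
case: (boolP (j.+1 < n)%N) => [lt_jn | /Plast //].
by apply: PS => //; apply: IH; rewrite val_nxt //; lia.
Qed.

Lemma perm_incr_id (f : {perm 'I_n}) :
  (forall j, (j.+1 < n)%N -> (f j < f (nxt j))%N) -> f = 1%g.
Proof.
move=> incr.
have ge_j j : (j <= f j)%N.
  elim/ord_ind_up: j => [j -> // | j lt_jn IHj].
  by have := incr j lt_jn; rewrite val_nxt //; lia.
have le_j j : (f j <= j)%N.
  elim/ord_ind_down: j => [j last_j | j lt_jn IHj]; first by move: (ltn_ord (f j)) last_j; lia.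
  by have := incr j lt_jn; move: IHj; rewrite val_nxt //; lia.
by apply/permP => j; apply/ord_inj; rewrite perm1; apply/eqP; rewrite eqn_leq ge_j le_j.
Qed.

Lemma perm_ltn_inj p q :
  (forall a b : 'I_n, (a < b)%N -> (p a < p b)%N = (q a < q b)%N) -> p = q.
Proof.
move=> cmp_lt.
have cmp x y : (p x < p y)%N = (q x < q y)%N.
  have neqN (f : {perm 'I_n}) u v : u != v -> (f u < f v)%N = ~~ (f v < f u)%N.
    move=> neq_uv; have neq_f : (f u : nat) != f v.
      by rewrite (inj_eq (@ord_inj n)) (inj_eq perm_inj).
    by rewrite ltn_neqAle neq_f -leqNgt.
  case: (ltngtP x y) => [|lt_yx|/ord_inj ->]; [exact: cmp_lt | | by rewrite !ltnn].
  have neq_xy : x != y by rewrite neq_ltn lt_yx orbT.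
  by rewrite (neqN p) // (neqN q) // cmp_lt.
apply/eqP; rewrite eq_mulVg1; apply/eqP/perm_incr_id => j lt_jn.
by rewrite !permM -cmp !permKV ltn_nxt.
Qed.

Lemma tperm_nxt_ltn k u v : (k.+1 < n)%N ->
  (tperm k (nxt k) u < tperm k (nxt k) v)%N =
  if [&& u == k & v == nxt k] || [&& u == nxt k & v == k] then (v < u)%N else (u < v)%N.
Proof.
move=> /val_nxt k'E; rewrite !permE /= -!(inj_eq (@ord_inj n)) /= k'E.
by case: (val u =P k); case: (val u =P k.+1); case: (val v =P k); case: (val v =P k.+1);
  rewrite /= ?k'E; lia.
Qed.

End Ordinals.

Lemma nth_ltn_count (s : seq nat) r x : sorted ltn s -> (r < size s)%N ->
  (nth 0 s r < x)%N = (r < count (fun y => y < x) s)%N.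
Proof.
elim: s r => [|h s IH] r //= srt lt_r.
have gt_h : all (fun y => h < y)%N s := order_path_min ltn_trans srt.
have none_below (le_xh : (x <= h)%N) : count (fun y => y < x)%N s = 0.
  by apply/eqP; rewrite -leqn0 leqNgt -has_count; apply/hasPn => y /(allP gt_h) /=; lia.
case: r lt_r => [|r] lt_r /=; first by case: (ltnP h x) => [|/none_below ->].
rewrite IH ?(path_sorted srt) //; case: (ltnP h x) => [_|/none_below ->]; first by rewrite add1n.
by rewrite ltn0.
Qed.

Lemma count_ltn_nth (s : seq nat) m : sorted ltn s -> (m < size s)%N ->
  count (fun y => y < nth 0 s m)%N s = m.
Proof.
move=> srt lt_m; apply/eqP; rewrite eqn_leq leqNgt -nth_ltn_count // ltnn /=.
case: m lt_m => // m lt_m; rewrite -nth_ltn_count ?(ltnW lt_m) //.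
by apply: (sorted_ltn_nth ltn_trans 0 srt); rewrite ?inE // ltnW.
Qed.

Lemma count_filter_split (T : Type) (p a : pred T) (s : seq T) :
  (count a [seq x <- s | ~~ p x] + count a [seq x <- s | p x])%N = count a s.
Proof. by elim: s => //= x s <-; case: (p x) => /=; lia. Qed.

Lemma sorted_val_filter n (P : pred 'I_n) : sorted ltn [seq val i | i <- enum 'I_n & P i].
Proof.
apply: (subseq_sorted ltn_trans (map_subseq val (filter_subseq P (enum 'I_n)))).
by rewrite val_enum_ord iota_ltn_sorted.
Qed.

Section InversionSets.
Variable n : nat.
Implicit Types (w : W n) (r : RL n) (a b x y : 'I_n).

Definition signed_pair (sx : bool) (x : 'I_n) (sy : bool) (y : 'I_n) : {ffun 'I_n -> int} :=
  [ffun i => ((-1) ^+ sx * (i == x)%:Z + (-1) ^+ sy * (i == y)%:Z)%R].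

Lemma signed_pairC sx x sy y : signed_pair sx x sy y = signed_pair sy y sx x.
Proof. by apply/ffunP => i; rewrite !ffunE addrC. Qed.

Lemma negrootv_lead (v : {ffun 'I_n -> int}) : negrootv v ->
  exists a, (0 < - v a)%R /\ forall x, (x < a)%N -> v x = 0%R.
Proof.
case/existsP => -[[a b] c] /andP [pos /eqP/ffunP v_root]; exists a; split.
- have := v_root a; rewrite !ffunE /= eqxx.
  move: pos; rewrite /posroot /=; case: c {v_root} => /=; case: eqP => [<-|]; lia.
- move=> x lt_xa; have := v_root x; rewrite !ffunE /=.
  have -> : (x == a) = false by apply/negbTE; rewrite neq_ltn lt_xa.
  have -> : (x == b) = false.
    by apply/negbTE; move: pos; rewrite /posroot neq_ltn; case: (c) => /=; lia.
  by case: (c); lia.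
Qed.

Lemma negrootv_pair_lt sx x sy y : (x < y)%N -> negrootv (signed_pair sx x sy y) = sx.
Proof.
move=> lt_xy; have neq_yx : (y == x) = false by apply/negbTE; rewrite neq_ltn lt_xy orbT.
apply/idP/idP => [|->].
- case/negrootv_lead => a [neg_a zero_below].
  have le_ax : (a <= x)%N.
    rewrite leqNgt; apply/negP => /zero_below; rewrite !ffunE eqxx eq_sym neq_yx.
    by case: (sx) => /=; lia.
  have a_x : a = x.
    apply/eqP; apply: contraTT neg_a => neq_ax; rewrite !ffunE (negbTE neq_ax).
    have -> : (a == y) = false by apply/negbTE; rewrite neq_ltn (leq_ltn_trans le_ax lt_xy).
    by case: (sx); case: (sy) => /=; lia.
  by move: neg_a; rewrite a_x !ffunE eqxx eq_sym neq_yx; case: (sx) => /=; lia.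
- apply/existsP; exists (x, y, sy); rewrite /posroot /=.
  case: (sy); rewrite ?(ltnW lt_xy) ?lt_xy /=; apply/eqP/ffunP => i; rewrite !ffunE /=;
  by case: (i == x); case: (i == y) => /=; lia.
Qed.

Lemma negrootv_pair_gt sx x sy y : (y < x)%N -> negrootv (signed_pair sx x sy y) = sy.
Proof. by move=> lt_yx; rewrite signed_pairC negrootv_pair_lt. Qed.

Lemma negrootv_pair_diag s x : negrootv (signed_pair s x s x) = s.
Proof.
apply/idP/idP => [|->].
- by case/negrootv_lead => a [+ _]; rewrite !ffunE; case: (a == x); case: (s) => /=; lia.
- apply/existsP; exists (x, x, true); rewrite /posroot /= leqnn /=.
  by apply/eqP/ffunP => i; rewrite !ffunE /=; case: (i == x) => /=; lia.
Qed.

Lemma actinv_rvec w a b c :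
  let p := (w.1^-1)%g in
  actinv w (rvec (a, b, c)) = signed_pair (w.2 (p a)) (p a) (w.2 (p b) (+) ~~ c) (p b).
Proof.
apply/ffunP => i; rewrite !ffunE /=.
have eq_inv (x : 'I_n) : (w.1 i == x) = (i == (w.1^-1)%g x).
  by apply/eqP/eqP => [<-|->]; rewrite ?permK ?permKV.
rewrite !eq_inv.
case: (a =P b) => [<-|neq_ab].
  by case: (i =P _) => [->|_]; case: (w.2 _); case: c => /=; lia.
have [->|_] := i =P (w.1^-1)%g a.
  have -> : ((w.1^-1)%g a == (w.1^-1)%g b) = false by rewrite (inj_eq perm_inj); exact/eqP.
  by case: (w.2 _); case: c => /=; lia.
by case: (i =P _) => [->|_]; case: (w.2 _); case: c => /=; lia.
Qed.

(* w^-1 maps +-e_a +-e_b to +-e_(p a) +-e_(p b), p = w.1^-1, and a root is negative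
   iff its coordinate of smaller index is. *)
Definition winv_neg w r : bool :=
  let p := (w.1^-1)%g in
  if (p r.1.1 < p r.1.2)%N then w.2 (p r.1.1) else w.2 (p r.1.2) (+) ~~ r.2.

Lemma mem_Phi w r : (r \in Phi w) = posroot r && winv_neg w r.
Proof.
rewrite inE; case pos: (posroot r) => //=.
case: r pos => [[a b] c]; rewrite /posroot /winv_neg actinv_rvec /=.
set p := (w.1^-1)%g.
have [<-|neq_ab] := eqVneq a b.
  case: c => pos; last by rewrite ltnn in pos.
  by rewrite ltnn addbF negrootv_pair_diag.
have neq_p : (p a : nat) != p b by rewrite (inj_eq val_inj) (inj_eq perm_inj).
move=> _; case: ltngtP => [lt_ab|lt_ba|eq_p]; first exact: negrootv_pair_lt.
  exact: negrootv_pair_gt.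
by rewrite eq_p eqxx in neq_p.
Qed.

Lemma winv_negE w u v c :
  winv_neg w (w.1 u, w.1 v, c) = if (u < v)%N then w.2 u else w.2 v (+) ~~ c.
Proof. by rewrite /winv_neg /= !permK. Qed.

End InversionSets.

Section SimpleReflections.
Variable n : nat.
Implicit Types (w : W n) (r : RL n) (k u v : 'I_n).

(* the positive one of the roots +-w(alpha_k) *)
Definition img_simple w k : RL n :=
  if (k.+1 < n)%N then
    if (w.1 k < w.1 (nxt k))%N then (w.1 k, w.1 (nxt k), w.2 k (+) w.2 (nxt k))
    else (w.1 (nxt k), w.1 k, w.2 k (+) w.2 (nxt k))
  else (w.1 k, w.1 k, true).

Lemma posroot_img_simple w k : posroot (img_simple w k).
Proof.
rewrite /img_simple /posroot; case lt_kn: (k.+1 < n); last by rewrite /= leqnn.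
have : (w.1 k : nat) != w.1 (nxt k).
  by rewrite (inj_eq (@ord_inj n)) (inj_eq perm_inj) nxt_neq.
by case: ltngtP => //= lt _; case: (_ (+) _) => //; exact: ltnW.
Qed.

Lemma img_simple_short w k u v c : (k.+1 < n)%N -> posroot (w.1 u, w.1 v, c) ->
  ((w.1 u, w.1 v, c) == img_simple w k) =
  ([&& u == k & v == nxt k] || [&& u == nxt k & v == k]) && (c == w.2 k (+) w.2 (nxt k)).
Proof.
move=> lt_kn pos; rewrite /img_simple lt_kn.
have neq_img : (w.1 k : nat) != w.1 (nxt k).
  by rewrite (inj_eq (@ord_inj n)) (inj_eq perm_inj) nxt_neq.
case: orP => [[/andP [/eqP eu /eqP ev] | /andP [/eqP eu /eqP ev]] | nadj] /=.
- have -> : (w.1 k < w.1 (nxt k))%N.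
    by move: pos neq_img; rewrite /posroot eu ev /=; case: (c); lia.
  by rewrite eu ev !xpair_eqE !eqxx.
- have -> : (w.1 k < w.1 (nxt k))%N = false.
    by move: pos neq_img; rewrite /posroot eu ev /=; case: (c); lia.
  by rewrite eu ev !xpair_eqE !eqxx.
- apply/negbTE; case: ifP => _; rewrite !xpair_eqE !(inj_eq perm_inj);
    apply/negP => /andP [/andP [eu ev] _]; apply: nadj; rewrite eu ev; by [left | right].
Qed.

Lemma winv_neg_mul_short w k r : (k.+1 < n)%N -> posroot r ->
  winv_neg (mulW w (sref k)) r = winv_neg w r (+) (r == img_simple w k).
Proof.
move=> lt_kn; case: r => [[a b] c]; rewrite -[a](permKV w.1) -[b](permKV w.1).
move: ((w.1^-1)%g a) ((w.1^-1)%g b) => u v pos.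
have ws1 x : w.1 x = (mulW w (sref k)).1 (tperm k (nxt k) x).
  by rewrite /mulW /sref lt_kn permM tpermK.
rewrite [in LHS](ws1 u) [in LHS](ws1 v) !winv_negE /mulW /sref lt_kn /= !ffunE /= !tpermK.
rewrite tperm_nxt_ltn // img_simple_short //.
case: orP => [adj|_]; last by rewrite addbF.
have lt_k : (k < nxt k)%N by rewrite val_nxt.
have ltN_k : (nxt k < k)%N = false by rewrite ltnNge ltnW.
by case: adj => /andP [/eqP -> /eqP ->]; rewrite ?lt_k ?ltN_k /=;
  case: (w.2 k); case: (w.2 (nxt k)); case: (c).
Qed.

Lemma winv_neg_mul_long w k r : ~~ (k.+1 < n)%N -> posroot r ->
  winv_neg (mulW w (sref k)) r = winv_neg w r (+) (r == img_simple w k).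
Proof.
move=> last_k; have le_k (x : 'I_n) : (x <= k)%N by move: (ltn_ord x) last_k; lia.
case: r => [[a b] c]; rewrite -[a](permKV w.1) -[b](permKV w.1).
move: ((w.1^-1)%g a) ((w.1^-1)%g b) => u v.
have ws1 : (mulW w (sref k)).1 = w.1 by rewrite /mulW /sref (negbTE last_k) mul1g.
rewrite /img_simple (negbTE last_k) -[in LHS]ws1 !winv_negE.
rewrite /mulW /sref (negbTE last_k) /= !ffunE !perm1 !xpair_eqE !(inj_eq perm_inj).
case: ltnP => [lt_uv|le_vu] pos.
  have -> : (u == k) = false by apply/negbTE/eqP => eu; move: (le_k v) lt_uv; rewrite eu; lia.
  by rewrite addbF.
have [ev|_] := v =P k; last by rewrite andbF addbF.
have eu : u = k by apply/ord_inj; move: (le_k u) le_vu; rewrite ev; lia.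
by move: pos; rewrite eu ev eqxx /posroot /= ltnn; case: (c); case: (w.2 k).
Qed.

Lemma winv_neg_mul w k r : posroot r ->
  winv_neg (mulW w (sref k)) r = winv_neg w r (+) (r == img_simple w k).
Proof.
by case: (boolP (k.+1 < n)%N); [exact: winv_neg_mul_short | exact: winv_neg_mul_long].
Qed.

Lemma Phi_mul w k : Phi (mulW w (sref k)) =
  if img_simple w k \in Phi w then Phi w :\ img_simple w k else img_simple w k |: Phi w.
Proof.
apply/setP => r; rewrite [in LHS]mem_Phi.
have [pos|npos] := boolP (posroot r); last first.
  have nimg : r != img_simple w k by apply: contraNneq npos => ->; exact: posroot_img_simple.
  by case: ifP => _; rewrite ?in_setD1 ?in_setU1 mem_Phi (negbTE npos) ?(negbTE nimg) ?andbF.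
have img_neg : winv_neg w (img_simple w k) = (img_simple w k \in Phi w).
  by rewrite mem_Phi posroot_img_simple.
rewrite /= winv_neg_mul //; case: ifP => in_Phi; rewrite ?in_setD1 ?in_setU1 mem_Phi pos /=;
  by case: eqP => [->|_]; rewrite ?addbT ?addbF // img_neg in_Phi.
Qed.

Lemma card_Phi_mul w k : #|Phi (mulW w (sref k))| =
  if img_simple w k \in Phi w then (#|Phi w|).-1 else (#|Phi w|).+1.
Proof.
rewrite Phi_mul; case: ifP => in_Phi; last by rewrite cardsU1 in_Phi.
by rewrite (cardsD1 (img_simple w k) (Phi w)) in_Phi.
Qed.

Lemma mem_img_simple w k : (img_simple w k \in Phi w) =
  if (k.+1 < n)%N then (if (w.1 k < w.1 (nxt k))%N then w.2 k else ~~ w.2 (nxt k))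
  else w.2 k.
Proof.
rewrite mem_Phi posroot_img_simple /img_simple.
case: ifP => lt_kn; last by rewrite winv_negE ltnn addbF.
have lt_k := ltn_nxt lt_kn; have ltN_k : (nxt k < k)%N = false by rewrite ltnNge ltnW.
by case: ifP => _; rewrite winv_negE ?lt_k ?ltN_k //=; case: (w.2 k); case: (w.2 (nxt k)).
Qed.

Lemma no_descent_id w : (forall k, img_simple w k \notin Phi w) -> w = idW n.
Proof.
move=> no_desc.
have sign_incr j : w.2 j = false /\ ((j.+1 < n)%N -> (w.1 j < w.1 (nxt j))%N).
  elim/ord_ind_down: j => [j last_j | j lt_jn [sgn_nxt _]].
    by move: (no_desc j); rewrite mem_img_simple (negbTE last_j) => /negbTE.
  move: (no_desc j); rewrite mem_img_simple lt_jn sgn_nxt.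
  by case: ifP => // lt /negbTE.
have w1 : w.1 = 1%g by apply: perm_incr_id => j; apply: (sign_incr j).2.
have w2 : w.2 = [ffun=> false] by apply/ffunP => j; rewrite ffunE (sign_incr j).1.
by move: w1 w2; case: w {no_desc sign_incr} => p s /= -> ->.
Qed.

Lemma Phi_idW : Phi (idW n) = set0.
Proof.
apply/setP => -[[a b] c]; rewrite mem_Phi inE /winv_neg /idW /= ffunE invg1 !perm1.
by rewrite ffunE /posroot /=; case: c; case: ltngtP.
Qed.

Lemma mulW_srefK w k : mulW (mulW w (sref k)) (sref k) = w.
Proof.
case: w => p s; rewrite /mulW /sref; case: ifP => _ /=.
  by congr pair; [rewrite mulgA tperm2 mul1g | apply/ffunP => i; rewrite !ffunE /= tpermK].
by congr pair; [rewrite !mul1g | apply/ffunP => i; rewrite !ffunE !perm1 addbA addbb].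
Qed.

Lemma card_Phi_reach m w : w \in reach n m -> (#|Phi w| <= m)%N.
Proof.
elim: m w => [|m IH] w /=; first by rewrite inE => /eqP ->; rewrite Phi_idW cards0.
case/allpairsP => -[x j] [/= /IH le_x _ ->]; rewrite card_Phi_mul.
by case: ifP => _; lia.
Qed.

Lemma reach_card_Phi w : w \in reach n #|Phi w|.
Proof.
have [m] := ubnP #|Phi w|; elim: m w => // m IH w.
have [-> _|nid] := eqVneq w (idW n); first by rewrite Phi_idW cards0 mem_seq1.
have [k desc] : exists k, img_simple w k \in Phi w.
  by apply/existsP; apply: contraR nid => /existsPn/no_descent_id ->.
have card_ws := card_Phi_mul w k; rewrite desc in card_ws.
have pos : (0 < #|Phi w|)%N by apply/card_gt0P; exists (img_simple w k).
rewrite -(prednK pos) /= => lt_m; apply/allpairsP; exists (mulW w (sref k), k).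
by rewrite mem_enum mulW_srefK; split => //=; rewrite -card_ws; apply: IH; rewrite card_ws -ltnS.
Qed.

Lemma card_Phi_lt w : (#|Phi w| < #|{: W n}|)%N.
Proof.
pose pair_of r : 'I_n * 'I_n := if r.2 then r.1 else (r.1.2, r.1.1).
have inj : {in Phi w &, injective pair_of}.
  move=> [[a b] c] [[a' b'] c']; rewrite !mem_Phi => /andP [+ _] /andP [+ _].
  by rewrite /pair_of /posroot; case: c; case: c' => /= pos pos' [e1 e2]; subst; rewrite //=; lia.
rewrite -(card_in_imset inj); apply: leq_ltn_trans (max_card _) _.
rewrite !card_prod card_ord card_Sn card_ffun card_bool card_ord.
case: n => //= m; apply: leq_ltn_trans (leq_mul (fact_geq m.+1) (leqnn m.+1)) _.
by rewrite ltn_pmul2l ?fact_gt0 // ltn_expl.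
Qed.

Lemma len_Phi w : len w = #|Phi w|.
Proof.
rewrite /len; set P := fun m : nat => w \in reach n m.
have found : has P (iota 0 #|{: W n}|).
  by apply/hasP; exists #|Phi w|; [rewrite mem_iota card_Phi_lt | exact: reach_card_Phi].
have lt_find := found; rewrite has_find size_iota in lt_find.
apply/eqP; rewrite eqn_leq; apply/andP; split.
  rewrite leqNgt; apply/negP => /(before_find 0).
  by rewrite nth_iota ?card_Phi_lt // /P reach_card_Phi.
by have := nth_find 0 found; rewrite nth_iota // add0n => /card_Phi_reach.
Qed.

End SimpleReflections.

Section Ascents.
Variable n : nat.
Implicit Types (w : W n) (k : 'I_n) (d : 'I_n -> bool).

Definition ls_ascent d k : Prop := d k = false /\ ((k.+1 < n)%N -> d (nxt k) = true).

Lemma inWp_ascent w k : inWp w ->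
  inWp (mulW w (sref k)) /\ (len w < len (mulW w (sref k)))%N <->
  img_simple w k \notin Phi w /\ (img_simple w k).2.
Proof.
rewrite /inWp !len_Phi card_Phi_mul Phi_mul => sub_w.
case: ifP => in_Phi /=.
  have : (0 < #|Phi w|)%N by apply/card_gt0P; exists (img_simple w k).
  by split => [[_]|[]] //; lia.
rewrite subUset sub1set sub_w andbT inE ltnSn.
have := posroot_img_simple w k; rewrite /posroot.
by case: (img_simple w k).2 => /= pos; split=> [[]|[]].
Qed.

Lemma inWp_ascentP w k : inWp w ->
  inWp (mulW w (sref k)) /\ (len w < len (mulW w (sref k)))%N <-> ls_ascent w.2 k.
Proof.
move=> /inWp_ascent ->; rewrite mem_img_simple /ls_ascent /img_simple.
case: ifP => _; last by case: (w.2 k); split => // -[].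
by case: ifP => _; case: (w.2 k); case: (w.2 (nxt k)); split => //= -[] // _ ->.
Qed.

End Ascents.

Section Injectivity.
Variable n : nat.
Implicit Types (w : W n).

Lemma winv_neg_diag w a : winv_neg w (a, a, true) = w.2 ((w.1^-1)%g a).
Proof. by rewrite /winv_neg /= ltnn addbF. Qed.

Lemma winv_ltn w (a b : 'I_n) : ((w.1^-1)%g a < (w.1^-1)%g b)%N =
  (winv_neg w (a, b, true) == winv_neg w (a, b, false)).
Proof. by rewrite /winv_neg /=; case: ifP; rewrite ?eqxx // addbF addbT; case: (w.2 _). Qed.

Lemma Phi_inj : injective (@Phi n).
Proof.
move=> w1 w2 eq_Phi.
have eq_neg r : posroot r -> winv_neg w1 r = winv_neg w2 r.
  by move=> pos; move/setP/(_ r): eq_Phi; rewrite !mem_Phi pos.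
have eq_inv : (w1.1^-1)%g = (w2.1^-1)%g.
  apply: perm_ltn_inj => a b lt_ab.
  by rewrite !winv_ltn (eq_neg (a, b, true)) ?(eq_neg (a, b, false)) // /posroot //= ltnW.
have eq_perm : w1.1 = w2.1 := invg_inj eq_inv.
case: w1 w2 eq_perm eq_inv eq_neg {eq_Phi} => [p s1] [_ s2] /= <- _ eq_neg.
congr pair; apply/ffunP => x; rewrite -[x](permK p).
by have := eq_neg (p x, p x, true); rewrite !winv_neg_diag; apply; rewrite /posroot /=.
Qed.

End Injectivity.

Section LSWord.
Variables (n : nat) (d : 'I_n -> bool).
Implicit Types a c : 'I_n.

Definition zeros : seq nat := [seq val i | i <- enum 'I_n & ~~ d i].
Local Notation nZ := (size zeros).

Lemma sorted_zeros : sorted ltn zeros.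
Proof. exact: sorted_val_filter. Qed.

Lemma sorted_ones : sorted ltn (ones d).
Proof. exact: sorted_val_filter. Qed.

Definition ls_list : seq 'I_n :=
  [seq i <- enum 'I_n | ~~ d i] ++ rev [seq i <- enum 'I_n | d i].

Lemma size_zeros_ones : (nZ + size (ones d))%N = n.
Proof. by rewrite !size_map !size_filter addnC count_predC size_enum_ord. Qed.

Lemma ls_list_inj : injective (fun a => nth a ls_list a).
Proof.
have size_ls : size ls_list = n.
  by rewrite size_cat size_rev -[in RHS]size_zeros_ones !size_map.
have uniq_ls : uniq ls_list.
  have uniq_enum : uniq (enum 'I_n) := enum_uniq _.
  rewrite cat_uniq rev_uniq !(filter_uniq _ uniq_enum) andbT /=.
  by apply/hasPn => i; rewrite mem_rev !mem_filter => /andP [-> _].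
move=> a c; rewrite /= (set_nth_default a c) ?size_ls //.
by move/eqP; rewrite nth_uniq ?size_ls // => /eqP /ord_inj.
Qed.

Definition ls_perm : {perm 'I_n} := perm ls_list_inj.

Lemma size_zero_list : size [seq i <- enum 'I_n | ~~ d i] = nZ.
Proof. by rewrite size_map. Qed.

Lemma size_one_list : size [seq i <- enum 'I_n | d i] = size (ones d).
Proof. by rewrite size_map. Qed.

Lemma ls_perm_zero a : (a < nZ)%N -> ls_perm a = nth 0 zeros a :> nat.
Proof.
by move=> lt_a; rewrite permE /ls_list nth_cat size_zero_list lt_a (nth_map a) ?size_zero_list.
Qed.

Lemma ls_perm_one a : (nZ <= a)%N -> ls_perm a = nth 0 (ones d) (n.-1 - a) :> nat.
Proof.
move=> le_a; rewrite permE /ls_list nth_cat size_zero_list ltnNge le_a /=.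
have sz := size_zeros_ones; have lt_an := ltn_ord a.
rewrite nth_rev size_one_list; last lia.
by rewrite (nth_map a) ?size_one_list; [congr (nat_of_ord (nth _ _ _)) |]; lia.
Qed.

Lemma ls_perm_sign a : d (ls_perm a) = (nZ <= a)%N.
Proof.
rewrite permE /ls_list nth_cat size_zero_list; case: ltnP => [lt_a|le_a].
  by rewrite -size_zero_list in lt_a; have := mem_nth a lt_a; rewrite mem_filter => /andP [/negbTE].
have lt_a : (a - nZ < size (rev [seq i <- enum 'I_n | d i]))%N.
  by rewrite size_rev size_one_list; move: (ltn_ord a) size_zeros_ones; lia.
by have := mem_nth a lt_a; rewrite mem_rev mem_filter => /andP [].
Qed.

Lemma count_zeros_ones x : (x <= n)%N ->
  (count (fun y => y < x) zeros + count (fun y => y < x) (ones d))%N = x.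
Proof.
move=> le_xn; have := filter_iota_ltn 0 le_xn; rewrite add0n => iotaE.
rewrite !count_map count_filter_split -count_map val_enum_ord -size_filter iotaE.
exact: size_iota.
Qed.

Definition S_low c : nat := nth 0 (ones d) (n.-1 - c) - (n.-1 - c).

Lemma count_zeros_below c : (nZ <= c)%N ->
  count (fun y => y < nth 0 (ones d) (n.-1 - c))%N zeros = S_low c.
Proof.
move=> le_c; have sz := size_zeros_ones; have lt_cn := ltn_ord c.
have lt_m : (n.-1 - c < size (ones d))%N by lia.
have lt_Tn : (nth 0 (ones d) (n.-1 - c) < n)%N.
  by have /mapP [i _ ->] := mem_nth 0 lt_m; exact: ltn_ord.
have := count_zeros_ones (ltnW lt_Tn); rewrite count_ltn_nth ?sorted_ones //.
by rewrite /S_low; lia.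
Qed.

Lemma S_low_le c : (nZ <= c)%N -> (S_low c <= nZ)%N.
Proof. by move/count_zeros_below <-; exact: count_size. Qed.

Lemma ls_perm_cross a c : (a < nZ)%N -> (nZ <= c)%N ->
  (ls_perm a < ls_perm c)%N = (a < S_low c)%N.
Proof.
move=> lt_a le_c; rewrite ls_perm_zero // ls_perm_one //.
by rewrite nth_ltn_count ?sorted_zeros // count_zeros_below.
Qed.

Lemma ls_perm_ltn_zeros a c : (a < c)%N -> (c < nZ)%N -> (ls_perm a < ls_perm c)%N.
Proof.
move=> lt_ac lt_c; rewrite !ls_perm_zero //; last exact: ltn_trans lt_c.
by apply: (sorted_ltn_nth ltn_trans 0 sorted_zeros); rewrite ?inE // (ltn_trans lt_ac).
Qed.

Lemma ls_perm_gtn_ones a c : (nZ <= a)%N -> (a < c)%N -> (ls_perm c < ls_perm a)%N.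
Proof.
move=> le_a lt_ac; rewrite !ls_perm_one //; last exact: leq_trans (ltnW lt_ac).
have sz := size_zeros_ones; have lt_cn := ltn_ord c.
by apply: (sorted_ltn_nth ltn_trans 0 sorted_ones); rewrite ?inE; lia.
Qed.

Lemma mem_S a c b : (((a, c), b) \in S d) = [&& b, nZ <= c, S_low c <= a & a <= c]%N.
Proof.
rewrite inE /=; case: b => //=.
have sz := size_zeros_ones; have lt_cn := ltn_ord c.
apply/hasP/idP => [[m] | /and3P [le_c low_a le_ac]].
  rewrite mem_iota add0n => lt_m /and3P [/eqP eq_c low_a le_ac].
  have em : m = (n.-1 - c)%N by lia.
  by rewrite /S_low -em; apply/and3P; split; lia.
exists (n.-1 - c)%N; first by rewrite mem_iota; lia.
by rewrite /S_low in low_a; apply/and3P; split; [apply/eqP | |]; lia.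
Qed.

Definition ls_elem : W n := ((ls_perm^-1)%g, [ffun i => d i]).

Lemma Phi_ls_elem : Phi ls_elem = S d.
Proof.
apply/setP => -[[a c] b]; rewrite mem_Phi mem_S /winv_neg /ls_elem /= invgK !ffunE.
rewrite !ls_perm_sign /posroot /=.
case: (ltngtP a c) => [lt_ac | lt_ca | /ord_inj <-]; rewrite ?if_same /=; last first.
- rewrite ltnn andbT; case: b => //=; rewrite addbF; case: leqP => //= le_a.
  by rewrite (leq_trans (S_low_le le_a)).
- by rewrite !andbF.
rewrite andbT; case: (ltnP c (size zeros)) => [lt_c | le_c].
  by rewrite ls_perm_ltn_zeros // leqNgt (ltn_trans lt_ac lt_c) andbF.
case: (ltnP a (size zeros)) => [lt_a | le_a].
  by rewrite ls_perm_cross // ltnNge; case: (S_low c <= a)%N; case: (b).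
have -> : (ls_perm a < ls_perm c)%N = false.
  by apply/negbTE; rewrite -leqNgt ltnW // ls_perm_gtn_ones.
by rewrite (leq_trans (S_low_le le_c)) //; case: (b).
Qed.

End LSWord.

Section Characterization.
Variables (n : nat) (lam : 'I_n -> int).
Implicit Types (w : W n) (d : 'I_n -> bool).

Lemma Phi_eq_S w d : Phi w = S d -> w = ls_elem d.
Proof. by move=> eq_wd; apply: Phi_inj; rewrite eq_wd Phi_ls_elem. Qed.

Lemma inWp_ls_elem d : inWp (ls_elem d).
Proof.
rewrite /inWp Phi_ls_elem; apply/subsetP => -[[a c] b].
by rewrite mem_S inE /= => /and4P [-> _ _ ->].
Qed.

Lemma inWpS_ls_elem d :
  inWpS lam (ls_elem d) <-> forall k, singular lam k -> ls_ascent d k.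
Proof.
have asc k : inWp (mulW (ls_elem d) (sref k)) /\
    (len (ls_elem d) < len (mulW (ls_elem d) (sref k)))%N <-> ls_ascent d k.
  by rewrite inWp_ascentP ?inWp_ls_elem // /ls_ascent !ffunE.
split => [[_ asc_d] k /asc_d /asc // | asc_d].
by split => [|k /asc_d /asc //]; exact: inWp_ls_elem.
Qed.

Lemma WpS_is_ascents : WpS_is lam (fun d => forall k, singular lam k -> ls_ascent d k).
Proof.
split => [w d + /Phi_eq_S eq_w | d asc_d]; first by rewrite eq_w => /inWpS_ls_elem.
by exists (ls_elem d); split; [exact/inWpS_ls_elem | exact: Phi_ls_elem].
Qed.

Lemma WpS_is_iff (P Q : ('I_n -> bool) -> Prop) :
  (forall d, P d <-> Q d) -> WpS_is lam P -> WpS_is lam Q.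
Proof.
move=> PQ [sound complete]; split => [w d inS eq_Phi | d /PQ /complete //].
exact/PQ/(sound w).
Qed.

End Characterization.

Local Open Scope ring_scope.

Theorem mainTheorem5 (n : nat) (lam : 'I_n -> int) (Hn : (0 < n)%N)
  (Hdom : (forall i j : 'I_n, (i <= j)%N -> lrho lam j <= lrho lam i) /\
          (forall i : 'I_n, 0 <= lrho lam i))
  (Hadj : forall k : 'I_n, (k.+1 < n)%N ->
            ~~ (singular lam k && singular lam (nxt k))) :
  ((forall k : 'I_n, k.+1 = n -> ~~ singular lam k) ->
     WpS_is lam (fun d => forall k : 'I_n, singular lam k ->
                   d k = false /\ d (nxt k) = true)) /\
  (forall k0 : 'I_n, k0.+1 = n -> singular lam k0 ->
     WpS_is lam (fun d => d k0 = false /\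
                   forall k : 'I_n, (k.+1 < n)%N -> singular lam k ->
                   d k = false /\ d (nxt k) = true)).
Proof.
have last_eq (k : 'I_n) : ~~ (k.+1 < n)%N -> k.+1 = n by move: (ltn_ord k); lia.
split=> [regular_last | k0 k0_last sing_k0]; apply: WpS_is_iff (WpS_is_ascents lam) => d.
- have inner k : singular lam k -> (k.+1 < n)%N.
    by move=> sing; apply: contraLR sing => not_inner; exact: regular_last (last_eq k not_inner).
  split=> asc_d k sing; have [d_k d_nxt] := asc_d k sing; split => //.
  exact: d_nxt (inner k sing).
- have last_k0 (k : 'I_n) : ~~ (k.+1 < n)%N -> k = k0.
    by move=> not_inner; apply: val_inj => /=; move: (last_eq k not_inner); lia.
  split=> [asc_d | [d_k0 asc_d] k sing].
    split=> [|k lt_kn /asc_d [d_k d_nxt]]; first by case: (asc_d k0 sing_k0).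
    by split=> //; exact: d_nxt.
  have [lt_kn | not_inner] := boolP (k.+1 < n)%N.
    by have [d_k d_nxt] := asc_d k lt_kn sing; split.
  by rewrite (last_k0 k not_inner); split => // /negP; rewrite k0_last ltnn.
Qed.
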